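(* Let $\mathcal{C}$ be a finite set of latent classes with cardinality $N_{\mathcal{C}}$, let $\rho$ be a probability distribution on $\mathcal{C}$ with $\rho(c)>0$ for all $c\in\mathcal{C}$, and for each $c\in\mathcal{C}$ let $\mathcal{D}_c$ be a distribution on a feature space $\mathcal{X}$. Then for any encoder $f:\mathcal{X}\to\mathbb{R}^d$, $$L_{\mathrm{sup}}(f,\mathcal{C}) \le L^\mu_{\mathrm{sup}}(f,\mathcal{C}) \le \frac{1}{p^\rho_{\min}} L_{\mathrm{un}}(f) + \log N_{\mathcal{C}},$$ where $p^\rho_{\min}=\min_{c\in\mathcal{C}}\rho(c)$.
   Context: Positive pairs are drawn from $\mathcal{D}_{\mathrm{sim}}(x,x^+)=\sum_{c\in\mathcal{C}}\rho(c)\mathcal{D}_c(x)\mathcal{D}_c(x^+)$ and negatives from $\mathcal{D}_{\mathrm{neg}}(x^-)=\sum_{c\in\mathcal{C}}\rho(c)\mathcal{D}_c(x^-)$. The unsupervised loss with one negative is $$L_{\mathrm{un}}(f)=\mathbb{E}_{(x,x^+)\sim\mathcal{D}_{\mathrm{sim}},\,x^-\sim\mathcal{D}_{\mathrm{neg}}}\Big[-\log\frac{\exp(f(x)^Tf(x^+))}{\exp(f(x)^Tf(x^+))+\exp(f(x)^Tf(x^-))}\Big].$$ With $\mathcal{D}_{\mathcal{C}}(x,c)=\rho(c)\mathcal{D}_c(x)$, the supervised loss is $$L_{\mathrm{sup}}(f,\mathcal{C})=\inf_{W\in\mathbb{R}^{N_{\mathcal{C}}\times d}}\mathbb{E}_{(x,c)\sim\mathcal{D}_{\mathcal{C}}}\Big[-\log\frac{\exp((Wf(x))_c)}{\sum_{c'\in\mathcal{C}}\exp((Wf(x))_{c'})}\Big],$$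 and $L^\mu_{\mathrm{sup}}(f,\mathcal{C})$ is the same expectation evaluated at the mean classifier $W^\mu$ whose row indexed by $c$ is $\mu_c=\mathbb{E}_{x\sim\mathcal{D}_c}[f(x)]$ (no infimum). *)

From HB Require Import structures.
From mathcomp Require Import all_boot all_order all_algebra.
From mathcomp Require Import all_classical all_reals all_analysis.
Set Implicit Arguments. Unset Strict Implicit. Unset Printing Implicit Defensive.
Import Order.TTheory GRing.Theory Num.Theory.
Local Open Scope ring_scope.
Local Open Scope ereal_scope.

Section ContrastiveDefs.
Context {d0 : measure_display} {X : measurableType d0} {R : realType}.
Context {C : finType} {d : nat}.
Variables (rho : C -> R) (D : C -> probability X R) (f : X -> 'rV[R]_d).

Definition dotp (u v : 'rV[R]_d) : R := \sum_(i < d) u 0%R i * v 0%R i.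

Definition lossun (x xp xn : X) : R :=
  - ln (expR (dotp (f x) (f xp)) /
        (expR (dotp (f x) (f xp)) + expR (dotp (f x) (f xn)))).

Definition E_neg (g : X -> \bar R) : \bar R :=
  \sum_(c : C) (rho c)%:E * \int[D c]_xn g xn.

Definition E_sim (h : X -> X -> \bar R) : \bar R :=
  \sum_(c : C) (rho c)%:E * \int[D c]_x \int[D c]_xp h x xp.

Definition L_un : \bar R :=
  E_sim (fun x xp => E_neg (fun xn => (lossun x xp xn)%:E)).

Definition lossW (W : C -> 'rV[R]_d) (x : X) (c : C) : R :=
  - ln (expR (dotp (W c) (f x)) / \sum_(c' : C) expR (dotp (W c') (f x))).

Definition L_supW (W : C -> 'rV[R]_d) : \bar R :=
  \sum_(c : C) (rho c)%:E * \int[D c]_x (lossW W x c)%:E.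

Definition L_sup : \bar R := ereal_inf (range L_supW).

Definition mu (c : C) : 'rV[R]_d :=
  \row_(i < d) Rintegral (D c) setT (fun x => f x 0%R i).

Definition L_sup_mu : \bar R := L_supW mu.

Definition pmin : R := fine (\big[Order.min/+oo]_(c : C) (rho c)%:E).

End ContrastiveDefs.

From mathcomp Require Import all_boot all_order all_algebra.
From mathcomp Require Import all_classical all_reals all_analysis.
From mathcomp Require Import measurable_realfun.
From mathcomp Require Import ring.
Import Order.TTheory GRing.Theory Num.Theory.
Local Open Scope ring_scope.

(* The contrastive loss is the logistic loss l(t) = ln (1 + e^-t) evaluated at
   f(x).(f(x+) - f(x-)), and l is convex.  Jensen's inequality, first in x- ~ D_c'
   and then in x+ ~ D_c, bounds L_un below by
     sum_c rho(c) E_{x ~ D_c} sum_c' rho(c') l(f(x).(mu_c - mu_c')).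
   Pointwise, the cross-entropy of the mean classifier is at most
   ln N + max_c' f(x).mu_c' - f(x).mu_c <= ln N + l(f(x).(mu_c - mu_cmax)) for a
   maximising class cmax, and rho(cmax) >= p_min turns this last term into at most
   1/p_min times the weighted sum above. *)

Section logistic_loss.
Context {R : realType}.
Implicit Types t m y : R.

Definition logistic_loss t : R := ln (1 + expR (- t)).

Lemma logistic_loss_ge0 t : 0 <= logistic_loss t.
Proof. by apply: ln_ge0; rewrite lerDl expR_ge0. Qed.

Lemma logistic_loss_geN t : - t <= logistic_loss t.
Proof. by rewrite /logistic_loss -{1}(expRK (- t)) ler_ln ?posrE ?expR_gt0 ?lerDr. Qed.

Lemma logistic_loss_tangent m y :
  logistic_loss m - expR (- m) / (1 + expR (- m)) * (y - m) <= logistic_loss y.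
Proof.
(* 1 + e^-y = (1 + e^-m) (s e^-u + (1 - s)), and convexity of exp bounds the
   second factor below by e^-(s u). *)
set E := expR (- m); set s := E / (1 + E); set u := y - m.
have E0 : 0 < E by rewrite expR_gt0.
have E1 : 0 < 1 + E by rewrite addr_gt0.
have s0 : 0 <= s by rewrite divr_ge0 ?ltW.
have s1 : s <= 1 by rewrite ler_pdivrMr// mul1r lerDr ltW.
have expRNy : expR (- y) = E * expR (- u).
  by rewrite -expRD; congr expR; rewrite /u; ring.
have split_1pE : 1 + expR (- y) = (1 + E) * (s * expR (- u) + (1 - s)).
  by rewrite expRNy /s; field; rewrite gt_eqF.
have cvx : expR (- (s * u)) <= s * expR (- u) + (1 - s).
  have := convex_expR (Itv01 s0 s1) (- u) 0.
  by rewrite !convRE /= mulr0 addr0 expR0 mulr1 mulrN; apply.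
have pos : 0 < s * expR (- u) + (1 - s) by apply: lt_le_trans cvx; exact: expR_gt0.
rewrite /logistic_loss split_1pE lnM ?posrE// lerD2l -[X in X <= _]expRK.
by rewrite ler_ln ?posrE ?expR_gt0.
Qed.

Lemma measurable_logistic_loss : measurable_fun setT logistic_loss.
Proof.
apply: measurableT_comp (@measurable_ln R) _.
apply: measurable_funD => //.
exact: measurableT_comp (@measurable_expR R) (@oppr_measurable R setT).
Qed.

End logistic_loss.

Section dotp.
Context {R : realType} {n : nat}.
Implicit Types u v : 'rV[R]_n.

Lemma dotpC u v : dotp u v = dotp v u.
Proof. by apply: eq_bigr => i _; rewrite mulrC. Qed.

Lemma dotpNl u v : dotp (- u) v = - dotp u v.
Proof. by rewrite /dotp -sumrN; apply: eq_bigr => i _; rewrite mxE mulNr. Qed.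

Lemma EFin_dotp u v :
  (dotp u v)%:E = (\sum_(i < n) (u 0%R i)%:E * (v 0%R i)%:E)%E.
Proof. by rewrite /dotp -sumEFin; apply: eq_bigr => i _; rewrite EFinM. Qed.

End dotp.

Lemma lossunE d0 (X : measurableType d0) (R : realType) (n : nat)
  (f : X -> 'rV[R]_n) x xp xn :
  lossun f x xp xn = logistic_loss (dotp (f x) (f xp) - dotp (f x) (f xn)).
Proof.
rewrite /lossun /logistic_loss; set A := dotp _ _; set B := dotp _ _.
have -> : expR A / (expR A + expR B) = (1 + expR (- (A - B)))^-1.
  rewrite opprB expRD expRN; field.
  by rewrite !gt_eqF ?addr_gt0 ?expR_gt0.
by rewrite lnV ?opprK// posrE addr_gt0// expR_gt0.
Qed.

Section softmax.
Context {R : realType} {C : finType}.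
Implicit Types (a rho : C -> R) (c : C).

Lemma expR_le_sum_expR a c : expR (a c) <= \sum_c' expR (a c').
Proof. by rewrite (bigD1 c)//= lerDl sumr_ge0// => i _; exact: expR_ge0. Qed.

Lemma sum_expR_gt0 a c : 0 < \sum_c' expR (a c').
Proof. exact: lt_le_trans (expR_gt0 _) (expR_le_sum_expR a c). Qed.

Lemma softmax_lossE a c :
  - ln (expR (a c) / \sum_c' expR (a c')) = ln (\sum_c' expR (a c')) - a c.
Proof.
have S0 := sum_expR_gt0 a c.
by rewrite lnM ?posrE ?invr_gt0 ?expR_gt0// expRK lnV ?posrE// opprD opprK addrC.
Qed.

Lemma softmax_loss_ge0 a c : 0 <= - ln (expR (a c) / \sum_c' expR (a c')).
Proof.
rewrite softmax_lossE subr_ge0 -{1}(expRK (a c)) ler_ln ?posrE ?expR_gt0//.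
  exact: expR_le_sum_expR.
exact: sum_expR_gt0.
Qed.

Lemma softmax_loss_le_max a c cmax : (forall c', a c' <= a cmax) ->
  - ln (expR (a c) / \sum_c' expR (a c')) <= ln #|C|%:R + (a cmax - a c).
Proof.
move=> amax; have N0 : (0 < #|C|)%N by apply/card_gt0P; exists c.
have S0 := sum_expR_gt0 a c.
rewrite softmax_lossE addrA lerD2r -[X in _ <= _ + X](expRK (a cmax)).
rewrite -lnM ?posrE ?ltr0n ?expR_gt0// ler_ln ?posrE ?mulr_gt0 ?ltr0n ?expR_gt0//.
apply: le_trans (_ : \sum_(c' : C) expR (a cmax) <= _).
  by apply: ler_sum => c' _; rewrite ler_expR.
by rewrite sumr_const mulr_natl.
Qed.

Lemma softmax_loss_le_logistic_loss rho (p : R) a c :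
  (forall c', 0 <= rho c') -> 0 < p -> (forall c', p <= rho c') ->
  - ln (expR (a c) / \sum_c' expR (a c')) <=
  ln #|C|%:R + p^-1 * \sum_c' rho c' * logistic_loss (a c - a c').
Proof.
move=> rho0 p0 p_le; pose cmax := [arg max_(c' > c) a c']%O.
have amax c' : a c' <= a cmax by rewrite /cmax; case: arg_maxP => // j _; apply.
apply: le_trans (softmax_loss_le_max a c cmax amax) _; rewrite lerD2l.
have gap : a cmax - a c <= logistic_loss (a c - a cmax).
  by rewrite -opprB logistic_loss_geN.
apply: le_trans gap _; rewrite (bigD1 cmax)//= mulrDr.
apply: le_trans (_ : p^-1 * (rho cmax * logistic_loss (a c - a cmax)) <= _).
  by rewrite mulrA ler_peMl ?logistic_loss_ge0// ler_pdivlMl// mulr1.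
rewrite lerDl; apply: mulr_ge0; first by rewrite invr_ge0 ltW.
by apply: sumr_ge0 => c' _; rewrite mulr_ge0 ?logistic_loss_ge0.
Qed.

End softmax.

Section pmin.
Context {R : realType} {C : finType}.
Implicit Types (rho : C -> R) (c : C).

Lemma pmin_le rho c : pmin rho <= rho c.
Proof.
have [cm _ minE] := eq_bigmin c xpredT (fun c => (rho c)%:E) isT (fun i _ => leey _).
by rewrite /pmin minE /= -lee_fin -minE; exact: bigmin_le.
Qed.

Lemma pmin_gt0 rho c0 : (forall c, 0 < rho c) -> 0 < pmin rho.
Proof.
have [cm _ minE] := eq_bigmin c0 xpredT (fun c => (rho c)%:E) isT (fun i _ => leey _).
by move=> rho_gt0; rewrite /pmin minE /= rho_gt0.
Qed.

End pmin.

Local Open Scope ereal_scope.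

Section integral_extra.
Context {d} {T : measurableType d} {R : realType}.

(* No measurability is assumed: it is applied to nested integrals, whose
   measurability in the outer variable is not available. *)
Lemma ge0_le_integral_nonmeas (mu : {measure set T -> \bar R}) (f g : T -> \bar R) :
  (forall x, 0 <= f x) -> (forall x, f x <= g x) ->
  \int[mu]_x f x <= \int[mu]_x g x.
Proof.
move=> f0 fg; have g0 x : 0 <= g x by exact: le_trans (f0 x) (fg x).
rewrite !ge0_integralTE//; apply: ereal_sup_le => _ [h /= hf <-].
by exists h => //= x; exact: le_trans (hf x) (fg x).
Qed.

Lemma probability_integral_cst (P : probability T R) (r : R) :
  \int[P]_x r%:E = r%:E.
Proof.
rewrite integral_cst//.
set t := (X in _ * X); have -> : t = 1 by exact: probability_setT.
exact: mule1.
Qed.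

Lemma ge0_jensen (P : probability T R) (phi : R -> R) (Y : T -> R) :
  (forall t, (0 <= phi t)%R) ->
  (forall m, exists s, forall y, (phi m + s * (y - m) <= phi y)%R) ->
  P.-integrable setT (EFin \o Y) ->
  (phi (fine (\int[P]_x (Y x)%:E)))%:E <= \int[P]_x (phi (Y x))%:E.
Proof.
move=> phi0 supp iY; set m := fine _.
have EY : \int[P]_x (Y x)%:E = m%:E by rewrite fineK // (integrable_fin_num _ iY).
have [s tangent] := supp m.
pose line x := (phi m + s * (Y x - m))%R.
have line_sum : (fun x => (line x)%:E) =
    (fun x => cst (phi m - s * m)%R%:E x + s%:E * (Y x)%:E).
  by apply: funext => x; rewrite /line /= -EFinM -EFinD; congr EFin; ring.
have Iline : \int[P]_x (line x)%:E = (phi m)%:E.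
  rewrite line_sum integralD //; last 2 first.
  - exact: finite_measure_integrable_cst.
  - exact: integrableZl.
  rewrite probability_integral_cst integralZl // EY.
  by rewrite -EFinM -EFinD; congr EFin; ring.
rewrite -Iline integralE.
apply: le_trans (_ : \int[P]_x ((fun x => (line x)%:E)^\+ x) <= _).
  by rewrite -[leRHS]sube0 leeB// integral_ge0.
apply: ge0_le_integral_nonmeas => x; first exact: funepos_ge0.
by rewrite funeposE ge_max !lee_fin phi0 tangent.
Qed.

End integral_extra.

Section class_means.
Context d0 (X : measurableType d0) (R : realType) (C : finType) (n : nat).
Variables (D : C -> probability X R) (f : X -> 'rV[R]_n).

Lemma measurable_dotp (u : 'rV[R]_n) :
  (forall i, measurable_fun setT (fun x => f x 0%R i)) ->
  measurable_fun setT (fun x => dotp u (f x)).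
Proof.
move=> mf; apply: measurable_sum => i.
exact: measurable_funM (measurable_cst _) (mf i).
Qed.

Hypothesis integrable_f : forall c i,
  (D c).-integrable setT (fun x => (f x 0%R i)%:E).

Lemma integrable_dotp c (u : 'rV[R]_n) :
  (D c).-integrable setT (fun x => (dotp u (f x))%:E).
Proof.
under eq_fun do rewrite EFin_dotp.
by apply: integrable_sum => // i _; apply: integrableZl => //; exact: integrable_f.
Qed.

Lemma integral_dotp c (u : 'rV[R]_n) :
  \int[D c]_x (dotp u (f x))%:E = (dotp u (mu D f c))%:E.
Proof.
under eq_integral do rewrite EFin_dotp.
rewrite integral_sum //; last by move=> i; apply: integrableZl => //; exact: integrable_f.
rewrite EFin_dotp; apply: eq_bigr => i _.
rewrite integralZl //; last exact: integrable_f.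
congr (_ * _); rewrite /mu mxE /Rintegral fineK //.
exact: integrable_fin_num (integrable_f c i).
Qed.

Lemma jensen_logistic_loss_dotp c (A : R) (v : 'rV[R]_n) :
  (logistic_loss (A + dotp v (mu D f c)))%:E <=
  \int[D c]_x (logistic_loss (A + dotp v (f x)))%:E.
Proof.
have iA : (D c).-integrable setT (EFin \o (fun=> A)).
  exact: finite_measure_integrable_cst.
have iY : (D c).-integrable setT (EFin \o (fun x => A + dotp v (f x))%R).
  exact: eq_integrable (integrableD measurableT iA (integrable_dotp c v)).
have EY : fine (\int[D c]_x (A + dotp v (f x))%:E) = (A + dotp v (mu D f c))%R.
  under eq_integral do rewrite EFinD.
  by rewrite integralD ?probability_integral_cst ?integral_dotp//; exact: integrable_dotp.
rewrite -EY; apply: ge0_jensen iY => [t|m]; first exact: logistic_loss_ge0.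
by exists (- (expR (- m) / (1 + expR (- m))))%R => y; rewrite mulNr logistic_loss_tangent.
Qed.

End class_means.

Section contrastive_bound.
Context d0 (X : measurableType d0) (R : realType) (C : finType) (n : nat).
Variables (rho : C -> R) (D : C -> probability X R) (f : X -> 'rV[R]_n).
Hypothesis rho_gt0 : forall c, (0 < rho c)%R.
Hypothesis measurable_f : forall i, measurable_fun setT (fun x => f x 0%R i).
Hypothesis integrable_f : forall c i,
  (D c).-integrable setT (fun x => (f x 0%R i)%:E).

Let E_neg_lossun x xp := E_neg rho D (fun xn => (lossun f x xp xn)%:E).
Let score x c := dotp (mu D f c) (f x).

Lemma E_neg_lossun_ge0 x xp : 0 <= E_neg_lossun x xp.
Proof.
apply: sume_ge0 => c _; apply: mule_ge0; first by rewrite lee_fin ltW.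
apply: integral_ge0 => xn _.
by rewrite lossunE lee_fin logistic_loss_ge0.
Qed.

Lemma E_neg_lossun_ge_means x xp :
  \sum_c (rho c)%:E * (logistic_loss (dotp (f x) (f xp) - dotp (f x) (mu D f c)))%:E
  <= E_neg_lossun x xp.
Proof.
apply: lee_sum => c _; apply: lee_wpmul2l; first by rewrite lee_fin ltW.
under eq_integral do rewrite lossunE -dotpNl.
by rewrite -dotpNl; exact: jensen_logistic_loss_dotp.
Qed.

Lemma integral_E_neg_lossun_ge_means c x :
  \sum_c' (rho c' * logistic_loss (score x c - score x c'))%:E
  <= \int[D c]_xp E_neg_lossun x xp.
Proof.
pose h c' xp := logistic_loss (dotp (f x) (f xp) - dotp (f x) (mu D f c')).
have h0 c' xp : 0 <= (rho c')%:E * (h c' xp)%:E.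
  by rewrite -EFinM lee_fin mulr_ge0 ?logistic_loss_ge0 ?ltW.
have mh c' : measurable_fun setT (fun xp => (h c' xp)%:E).
  apply/measurable_EFinP; apply: measurableT_comp measurable_logistic_loss _.
  by apply: measurable_funB => //; exact: measurable_dotp.
have sum_le : \int[D c]_xp (\sum_c' (rho c')%:E * (h c' xp)%:E) <=
    \int[D c]_xp E_neg_lossun x xp.
  apply: ge0_le_integral_nonmeas => xp; last exact: E_neg_lossun_ge_means.
  by apply: sume_ge0 => c' _; exact: h0.
apply: le_trans sum_le.
have mrh c' : measurable_fun setT (fun xp => (rho c')%:E * (h c' xp)%:E).
  exact: emeasurable_funM.
rewrite (ge0_integral_sum _ _ mrh (fun c' xp _ => h0 c' xp))//.
apply: lee_sum => c' _.
rewrite EFinM ge0_integralZl_EFin ?(ltW (rho_gt0 c'))// => [|xp _]; last first.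
  by rewrite lee_fin logistic_loss_ge0.
apply: lee_wpmul2l; first by rewrite lee_fin ltW.
rewrite /h /score (dotpC (mu D f c)) (dotpC (mu D f c')) addrC.
under eq_integral do rewrite addrC.
exact: jensen_logistic_loss_dotp.
Qed.

Lemma integral_lossW_mu_le c :
  \int[D c]_x (lossW f (mu D f) x c)%:E <=
  (ln #|C|%:R)%:E + (pmin rho)^-1%:E * \int[D c]_x \int[D c]_xp E_neg_lossun x xp.
Proof.
have pinv0 : (0 <= (pmin rho)^-1)%R by rewrite invr_ge0 ltW// (pmin_gt0 rho c).
pose S x := \sum_c' (rho c' * logistic_loss (score x c - score x c'))%:E.
have S0 x : 0 <= S x.
  by apply: sume_ge0 => c' _; rewrite lee_fin mulr_ge0 ?logistic_loss_ge0 ?ltW.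
have mS : measurable_fun setT S.
  apply: emeasurable_sum => c'; apply/measurable_EFinP.
  apply: measurable_funM => //; apply: measurableT_comp measurable_logistic_loss _.
  by apply: measurable_funB; exact: measurable_dotp.
apply: (@le_trans _ _ (\int[D c]_x ((ln #|C|%:R)%:E + (pmin rho)^-1%:E * S x))).
  apply: ge0_le_integral_nonmeas => x; first by rewrite lee_fin softmax_loss_ge0.
  rewrite /S sumEFin -EFinM -EFinD lee_fin.
  apply: softmax_loss_le_logistic_loss (pmin_le rho) => [c'|]; first exact: ltW.
  exact: pmin_gt0 rho c rho_gt0.
have K0 : (0 <= ln (#|C|%:R : R))%R by rewrite ln_ge0// ler1n; apply/card_gt0P; exists c.
rewrite ge0_integralD// => [|x _|]; [|by rewrite mule_ge0|exact: emeasurable_funM].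
rewrite probability_integral_cst ge0_integralZl_EFin// leeD2l//.
apply: lee_wpmul2l; first by rewrite lee_fin.
by apply: ge0_le_integral_nonmeas => // x; exact: integral_E_neg_lossun_ge_means.
Qed.

Lemma L_sup_mu_le : (\sum_c rho c)%R = 1%R ->
  L_sup_mu rho D f <= (pmin rho)^-1%:E * L_un rho D f + (ln #|C|%:R)%:E.
Proof.
move=> rho1; set K := (ln #|C|%:R)%:E; set p := (pmin rho)^-1%:E.
pose I c := \int[D c]_x \int[D c]_xp E_neg_lossun x xp.
have I0 c : 0 <= I c.
  by apply: integral_ge0 => x _; apply: integral_ge0 => xp _; exact: E_neg_lossun_ge0.
apply: (@le_trans _ _ (\sum_c (rho c)%:E * (K + p * I c))).
  apply: lee_sum => c _; apply: lee_wpmul2l; first by rewrite lee_fin ltW.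
  exact: integral_lossW_mu_le.
suff -> : \sum_c (rho c)%:E * (K + p * I c) = p * L_un rho D f + K by [].
under eq_bigr do rewrite muleDr//.
rewrite big_split /= addeC; congr (_ + _).
  rewrite /L_un /E_sim ge0_sume_distrr => [|c _]; last first.
    by apply: mule_ge0; [rewrite lee_fin ltW | exact: I0].
  by apply: eq_bigr => c _; rewrite muleCA.
by rewrite /K; under eq_bigr do rewrite -EFinM; rewrite sumEFin -mulr_suml rho1 mul1r.
Qed.

End contrastive_bound.

Theorem lemma3p1 (d0 : measure_display) (X : measurableType d0) (R : realType)
  (C : finType) (rho : C -> R) (D : C -> probability X R) (d : nat)
  (f : X -> 'rV[R]_d) :
  (forall c, (0 < rho c)%R) ->
  (\sum_(c : C) rho c)%R = 1%R ->
  (forall i : 'I_d, measurable_fun setT (fun x => f x 0%R i)) ->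
  (forall (c : C) (i : 'I_d), (D c).-integrable setT (fun x => (f x 0%R i)%:E)) ->
  L_sup rho D f <= L_sup_mu rho D f /\
  L_sup_mu rho D f <= (pmin rho)^-1%:E * L_un rho D f + (ln (#|C|%:R))%:E.
Proof.
move=> rho_gt0 rho1 measurable_f integrable_f; split.
  by apply: ereal_inf_lbound; exists (mu D f).
exact: L_sup_mu_le.
Qed.
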